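(* With notation as in the context, let $N$ be a $\Gamma$-module and consider the map $\circ\pi\colon\mathcal{H}om_\Gamma(\mathcal{P}_{\le n},N)\to\mathcal{H}om_\Gamma(\mathcal{P},N)$. Use the identifications $\mathrm{H}^i(\mathcal{H}om_\Gamma(\mathcal{P},N))\cong\mathrm{Ext}^i_\Gamma(M,N)$ and, since $\mathcal{P}_{\le n}[-n]=\mathcal{P}$, $\mathrm{H}^{i+n}(\mathcal{H}om_\Gamma(\mathcal{P}_{\le n},N))\cong\mathrm{Ext}^i_\Gamma(M,N)$. Then: (1) The map $\mathrm{Hom}_\Gamma(M,N)\to\mathrm{Ext}^n_\Gamma(M,N)$ induced by $\mathrm{H}^n(\circ\pi)$ is surjective, and its kernel is $\operatorname{Im}(\circ d_0)$, where $\mathrm{Hom}_\Gamma(M,N)$ is identified with $\ker(\circ d_1\colon\mathrm{Hom}_\Gamma(P_0,N)\to\mathrm{Hom}_\Gamma(P_1,N))\subseteq \mathrm{Hom}_\Gamma(P_0,N)$ and $\circ d_0\colon\mathrm{Hom}_\Gamma(P_{n-1},N)\to\mathrm{Hom}_\Gamma(P_0,N)$ is precomposition with $d_0$. (2) For every $i>0$, the map $\mathrm{Ext}^i_\Gamma(M,N)\to\mathrm{Ext}^{i+n}_\Gamma(M,N)$ induced by $\mathrm{H}^{i+n}(\circ\pi)$ is an isomorphism.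
   Context: $k$ is a field, $\Gamma$ a $k$-algebra (right modules), $M$ a $\Gamma$-module, $n\ge1$. Given a complex of finitely generated projectives $\mathrm{P}=(0\to P_{n-1}\xrightarrow{d_{n-1}}\cdots\xrightarrow{d_1}P_0\to0)$, $P_i$ in degree $-i$, and $\alpha\colon P_0\to M$, $\beta\colon M\to P_{n-1}$ with $0\to M\xrightarrow{\beta}P_{n-1}\to\cdots\to P_0\xrightarrow{\alpha}M\to0$ exact; $d_0=\beta\circ\alpha$. $\mathcal{P}$ is the projective resolution of $M$ with a copy of $P_i$ (the $\ell$-th copy) in degree $-(\ell n+i)$ for $\ell\ge0$, $0\le i\le n-1$, differential $(-1)^{\ell n}d_i$ from the $\ell$-th copy of $P_i$ to the $\ell$-th copy of $P_{i-1}$ ($i\ge1$) and $(-1)^{\ell n}d_0$ from the $(\ell+1)$-th copy of $P_0$ to the $\ell$-th copy of $P_{n-1}$. $\mathcal{P}_{\le n}$ is the brutal truncation of $\mathcal{P}$ consisting of all copies with $\ell\ge1$ (same degrees and differentials), and $\pi\colon\mathcal{P}\to\mathcal{P}_{\le n}$ is the projection, with kernel the $0$-th copy. $\mathcal{H}om_\Gamma(-,N)$ denotes the Hom complex, graded so that $\mathrm{H}^i(\mathcal{H}om_\Gamma(\mathcal{P},N))\cong\mathrm{Ext}^i_\Gamma(M,N)$; $[1]$ shifts to the left with a sign on the differential. *)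

From HB Require Import structures.
From mathcomp Require Import all_boot all_algebra.
Set Implicit Arguments. Unset Strict Implicit. Unset Printing Implicit Defensive.
Import GRing.Theory.
Local Open Scope ring_scope.

(* Right Gamma-modules are modelled as left modules over the converse ring
   Gamma^c; Gamma-linear maps X -> Y are {linear X -> Y}.  In this file R
   stands for Gamma^c. *)
Section Defs.
Variable R : pzRingType.

Definition projective_mod (X : lmodType R) : Prop :=
  forall (A B : lmodType R) (g : {linear A -> B}),
    (forall b, exists a, g a = b) ->
    forall f : {linear X -> B}, exists h : {linear X -> A}, forall x, g (h x) = f x.

Definition fin_gen_mod (X : lmodType R) : Prop :=
  exists s : seq X, forall x : X, exists c : seq R,
    x = \sum_(j < size s) c`_j *: s`_j.

(* Data: n >= 1, the modules P_0,...,P_{n-1} (P i for i <= n.-1),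
   d i : P_{i+1} -> P_i  (this is the paper's d_{i+1}), alpha, beta. *)
Variables (n : nat) (P : nat -> lmodType R) (M N : lmodType R)
  (d : forall i, {linear P i.+1 -> P i})
  (alpha : {linear P 0 -> M}) (beta : {linear M -> P n.-1}).

Definition d0 (x : P 0) : P n.-1 := beta (alpha x).

Definition exact_at_P0 : Prop :=
  match n.-1 as m0 return (M -> P m0) -> Prop with
  | 0 => fun b => forall x : P 0, alpha x = 0 <-> exists y : M, b y = x
  | _.+1 => fun _ => forall x : P 0, alpha x = 0 <-> exists y : P 1, d 0 y = x
  end beta.

Definition exact_at_top : Prop :=
  match n.-1 as m0 return (M -> P m0) -> Prop with
  | 0 => fun _ => True
  | m'.+1 => fun b => forall x : P m'.+1, d m' x = 0 <-> exists y : M, b y = x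
  end beta.

Definition exact_mid : Prop :=
  forall i, (i.+2 < n)%N ->
    forall x : P i.+1, d i x = 0 <-> exists y : P i.+2, d i.+1 y = x.

Definition res_exact : Prop :=
  [/\ injective beta, (forall y : M, exists x, alpha x = y),
      exact_at_P0, exact_mid & exact_at_top].

(* The resolution \mathcal P : the l-th copy of P_i sits in degree -(l n + i);
   differentials (-1)^{l n} d_i  (copy l of P_i -> copy l of P_{i-1}) and
   (-1)^{l n} d_0 (copy l+1 of P_0 -> copy l of P_{n-1}).
   A cochain of Hom(\mathcal P, N) in degree l n + i (i < n) is a
   Gamma-linear f : P_i -> N. *)
Definition sgn (l : nat) : R := (-1) ^+ (l * n).

Definition castP i j (e : i = j) (x : P i) : P j := eq_rect i P x j e.

Definition cocycle (l i : nat) (f : P i -> N) : Prop :=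
  (forall x : P i.+1, (i < n.-1)%N -> f (sgn l *: d i x) = 0) /\
  (forall (e : n.-1 = i) (x : P 0), f (castP e (sgn l *: d0 x)) = 0).

(* f (in degree l n + i) is a coboundary in the Hom complex of the brutal
   truncation of \mathcal P keeping the copies l >= lo (lo = 0: \mathcal P
   itself; lo = 1: \mathcal P_{<= n}); only meaningful for l >= lo. *)
Definition coboundary (lo l i : nat) : (P i -> N) -> Prop :=
  match i as i0 return (P i0 -> N) -> Prop with
  | 0 => fun f =>
      if (lo < l)%N then
        exists g : {linear P n.-1 -> N}, forall x, f x = g (sgn l.-1 *: d0 x)
      else forall x, f x = 0
  | i'.+1 => fun f =>
      exists g : {linear P i' -> N}, forall x, f x = g (sgn l *: d i' x)
  end.

End Defs.

Arguments cocycle {R n P M N} d alpha beta l%_N i%_N f.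
Arguments coboundary {R n P M N} d alpha beta lo%_N l%_N i%_N _.

From HB Require Import structures.
From mathcomp Require Import all_boot all_algebra.
Set Implicit Arguments. Unset Strict Implicit. Unset Printing Implicit Defensive.
Import GRing.Theory.
Local Open Scope ring_scope.

(* Since P_{<= n}[-n] = P, a cochain of Hom(P_{<= n}, N) in degree i + n is a
   cochain of Hom(P, N) in degree i, and o pi is the identity on cochains; only
   the signs (-1)^{l n} of the differentials change.  Signs are units, so they
   affect neither cocycles nor coboundaries, except in degree n: there the
   coboundaries of Hom(P, N) are the maps factoring through d_0 (the image of
   o d_0), whereas P_{<= n} has nothing in degree n - 1.  Exactness at P_0
   makes every w o d_0 a cocycle. *)

Section Signs.
Variables (R : pzRingType) (U V : lmodType R).

Lemma linear_signr_eq0 (f : {linear U -> V}) (a : nat) (y : U) :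
  f ((-1) ^+ a *: y) = 0 <-> f y = 0.
Proof.
rewrite linearZ_LR; split=> [fy0|->]; last by rewrite scaler0.
by rewrite -[f y]scale1r -(signrMK a 1) mulr1 -scalerA fy0 scaler0.
Qed.

Lemma exists_linear_signr (g : {linear U -> V}) (a b : nat) :
  exists g' : {linear U -> V}, forall y, g' ((-1) ^+ a *: y) = g ((-1) ^+ b *: y).
Proof.
rewrite -(signr_odd _ a) -(signr_odd _ b).
case: (odd a); case: (odd b); rewrite ?expr0 ?expr1.
- by exists g.
- by exists (\- g) => y; rewrite !linearZ_LR /= scaleN1r scale1r opprK.
- by exists (\- g) => y; rewrite !linearZ_LR /= scaleN1r scale1r.
- by exists g.
Qed.

End Signs.

Section HomComplex.
Variables (R : pzRingType) (n : nat) (P : nat -> lmodType R) (M N : lmodType R)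
  (d : forall i, {linear P i.+1 -> P i})
  (alpha : {linear P 0%N -> M}) (beta : {linear M -> P n.-1}).

Lemma cocycle_shift l l' i (f : {linear P i -> N}) :
  cocycle d alpha beta l i f -> cocycle d alpha beta l' i f.
Proof.
rewrite /cocycle /sgn => -[fd fd0]; split=> [x lt_i|e x].
  by apply/linear_signr_eq0; have /linear_signr_eq0 := fd x lt_i.
move: (fd0 e x); case: i / e f {fd fd0} => f /=.
by move/linear_signr_eq0 => fx0; apply/linear_signr_eq0.
Qed.

Lemma coboundary_eq0 lo l i (f : P i -> N) :
  (forall x, f x = 0) -> coboundary d alpha beta lo l i f.
Proof.
case: i f => [|i] f f0 /=; last by exists \0 => x; rewrite f0.
by case: ifP => // _; exists \0 => x; rewrite f0.
Qed.

(* For i = 0 the copy l must not be the lowest one, where coboundaries vanish. *)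
Lemma coboundary_shift lo l l' i (f : P i -> N) :
  (0 < i)%N || (lo < l)%N ->
  coboundary d alpha beta lo l' i f -> coboundary d alpha beta lo l i f.
Proof.
case: i f => [|i] f /=; last first.
  move=> _ [g fg]; have [g' g'g] := exists_linear_signr g (l * n) (l' * n).
  by exists g' => x; rewrite fg /sgn g'g.
move=> lt_lo_l; rewrite lt_lo_l; case: ifP => _; last first.
  by move=> f0; exists \0 => x; rewrite f0.
case=> g fg; have [g' g'g] := exists_linear_signr g (l.-1 * n) (l'.-1 * n).
by exists g' => x; rewrite fg /sgn g'g.
Qed.

Lemma coboundary_deg_n_factors (f : P 0%N -> N) :
  coboundary d alpha beta 0 1 0 f <->
  exists g : {linear P n.-1 -> N}, forall x, f x = g (d0 alpha beta x).
Proof. by rewrite /= /sgn mul0n expr0; split=> -[g fg]; exists g => x; rewrite fg scale1r. Qed.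

Lemma exact_at_P0_alpha_d (x : P 1) :
  exact_at_P0 d alpha beta -> (0 < n.-1)%N -> alpha (d 0 x) = 0.
Proof.
rewrite /exact_at_P0; move: (n.-1) beta => m b.
by case: m b => // m b ex _; apply/ex; exists x.
Qed.

Lemma exact_at_P0_alpha_beta (e : n.-1 = 0%N) (y : M) :
  exact_at_P0 d alpha beta -> alpha (castP e (beta y)) = 0.
Proof.
rewrite /exact_at_P0 /castP; move: (n.-1) beta e => m b e.
by subst m => /= ex; apply/ex; exists y.
Qed.

Lemma cocycle_comp_d0 l (g : {linear P n.-1 -> N}) (w : P 0%N -> N) :
  exact_at_P0 d alpha beta -> (forall x, w x = g (d0 alpha beta x)) ->
  cocycle d alpha beta l 0 w.
Proof.
move=> ex wg; split=> [x lt_n|e x]; rewrite wg /d0 -linearZ_LR /=.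
  by rewrite exact_at_P0_alpha_d // !linear0.
by rewrite exact_at_P0_alpha_beta // !linear0.
Qed.

End HomComplex.

Theorem lemma3p7 (k : fieldType) (Gamma : algType k) (n : nat)
  (P : nat -> lmodType Gamma^c) (M N : lmodType Gamma^c)
  (d : forall i, {linear P i.+1 -> P i})
  (alpha : {linear P 0%N -> M}) (beta : {linear M -> P n.-1}) :
  (0 < n)%N ->
  (forall i, (i < n)%N -> projective_mod (P i) /\ fin_gen_mod (P i)) ->
  res_exact d alpha beta ->
  (* (1): Hom(M,N) = cocycles of Hom(P_{<=n},N) in degree n (copy 1 of P_0);
     the map to Ext^n = H^n(Hom(P,N)) sends w to the class of w o pi = w *)
  ((forall z : {linear P 0%N -> N}, cocycle d alpha beta 1 0 z ->
      exists w : {linear P 0%N -> N}, cocycle d alpha beta 1 0 w /\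
        coboundary d alpha beta 0 1 0 (fun x => w x - z x)) /\
   (forall w : {linear P 0%N -> N},
      (cocycle d alpha beta 1 0 w /\ coboundary d alpha beta 0 1 0 w) <->
      exists g : {linear P n.-1 -> N}, forall x, w x = g (d0 alpha beta x))) /\
  (* (2): degree i = l n + r; Ext^i -> Ext^{i+n}, cochain-level identity
     (shift identification followed by o pi) *)
  (forall i, (0 < i)%N ->
     let l := (i %/ n)%N in let r := (i %% n)%N in
     (forall z : {linear P r -> N}, cocycle d alpha beta l.+1 r z ->
        exists w : {linear P r -> N}, cocycle d alpha beta l r w /\
          coboundary d alpha beta 0 l.+1 r (fun x => w x - z x)) /\
     (forall w : {linear P r -> N}, cocycle d alpha beta l r w ->
        coboundary d alpha beta 0 l.+1 r w -> coboundary d alpha beta 0 l r w)).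
Proof.
(* At the cochain level only exactness at P_0 is used. *)
move=> _ _ [_ _ ex0 _ _]; split; [split|].
- move=> z cz; exists z; split=> //.
  by apply: coboundary_eq0 => x; rewrite subrr.
- move=> w; split=> [[_ /coboundary_deg_n_factors] //|wd0].
  split; last exact/coboundary_deg_n_factors.
  by case: wd0 => g; exact: cocycle_comp_d0.
move=> i i_gt0 l r; split.
  move=> z cz; exists z; split; first exact: cocycle_shift cz.
  by apply: coboundary_eq0 => x; rewrite subrr.
move=> w _; apply: coboundary_shift.
rewrite lt0n; case: eqP => //= r0.
by move: i_gt0; rewrite (divn_eq i n) -/l -/r r0 addn0 muln_gt0 => /andP[].
Qed.
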